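(* Let $G=(V,E)$ be a finite simple graph of order $n$ and let $T=n-1$. If $(s,x,y,z)$ is an optimal solution of the Infection Model $\mathrm{IM}(G,T)$ (minimizing $\sum_{v\in V}s_v$), then $C=\{v\in V\colon s_v=1\}$ is a minimum zero forcing set of $G$.
   Context: Zero forcing: under the standard color change rule a filled vertex $u$ can force a non-filled vertex $v$ if $v$ is the only non-filled neighbor of $u$; $C\subseteq V$ is a zero forcing set if, starting with $C$ filled and repeatedly forcing, all of $V$ becomes filled. $\mathrm{Z}(G)$ is the minimum size of a zero forcing set, and a minimum zero forcing set is a zero forcing set of size $\mathrm{Z}(G)$. $N(u)$ is the neighborhood of $u$. Infection Model: let $A$ be the set of arcs containing both $(u,v)$ and $(v,u)$ for each edge $\{u,v\}\in E$. The model $\mathrm{IM}(G,T)$ has variables $s_v\in\{0,1\}$ and $x_v\in\{0,1,\dots,T\}$ for $v\in V$, $y_a\in\{0,1\}$ for $a\in A$, and $z\in\{0,1,\dots,T\}$, subject to: (i) $s_v+\sum_{a=(u,v)\in A}y_a=1$ for all $v\in V$; (ii) $x_u-x_v+(T+1)y_a\leq T$ for all $a=(u,v)\in A$; (iii) $x_w-x_v+(T+1)y_a\leq T$ for all $a=(u,v)\in A$ and $w\in N(u)\setminus\{v\}$; (iv) $x_v-z\leq 0$ for all $v\in V$; objective: minimize $\sum_{v\in V}s_v$. *)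

From mathcomp Require Import all_boot all_order all_algebra.
Set Implicit Arguments. Unset Strict Implicit. Unset Printing Implicit Defensive.
Import Order.TTheory GRing.Theory Num.Theory.

Definition simple_graph (V : finType) (e : rel V) : Prop :=
  symmetric e /\ irreflexive e.

Definition nbhd (V : finType) (e : rel V) (u : V) : {set V} := [set w | e u w].

Definition force_step (V : finType) (e : rel V) (F : {set V}) : {set V} :=
  F :|: [set v | (v \notin F) &&
                 [exists u, [&& u \in F, e u v &
                    [forall w, (e u w && (w != v)) ==> (w \in F)]]]].

(* Filled set after repeatedly forcing (|V| rounds suffice, the process being
   monotone and stabilizing). *)
Definition closure_zf (V : finType) (e : rel V) (C : {set V}) : {set V} :=
  iter #|V| (force_step e) C.

Definition zero_forcing_set (V : finType) (e : rel V) (C : {set V}) : Prop :=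
  closure_zf e C = [set: V].

Definition min_zero_forcing_set (V : finType) (e : rel V) (C : {set V}) : Prop :=
  zero_forcing_set e C /\ forall D : {set V}, zero_forcing_set e D -> #|C| <= #|D|.

(* Infection model IM(G,T). Variables: s : V -> int, x : V -> int,
   y : V -> V -> int (only y u v with e u v, i.e. arcs, are meaningful), z : int. *)
Definition IM_feasible (V : finType) (e : rel V) (T : int)
  (s x : V -> int) (y : V -> V -> int) (z : int) : Prop :=
  [/\ (forall v, s v = 0 \/ s v = 1),
      (forall v, 0 <= x v <= T),
      (forall u v, e u v -> y u v = 0 \/ y u v = 1),
      0 <= z <= T &
  [/\ (forall v, s v + \sum_(u | e u v) y u v = 1),
      (forall u v, e u v -> x u - x v + (T + 1) * y u v <= T),
      (forall u v w, e u v -> e u w -> w != v ->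
                     x w - x v + (T + 1) * y u v <= T) &
      (forall v, x v - z <= 0)]]%R.

Definition IM_objective (V : finType) (s : V -> int) : int := (\sum_v s v)%R.

Definition IM_optimal (V : finType) (e : rel V) (T : int)
  (s x : V -> int) (y : V -> V -> int) (z : int) : Prop :=
  IM_feasible e T s x y z /\
  forall s' x' y' z', IM_feasible e T s' x' y' z' ->
    (IM_objective s <= IM_objective s')%R.

From mathcomp Require Import all_boot all_order all_algebra.
From mathcomp Require Import zify.
Import Order.TTheory GRing.Theory Num.Theory.

Set Implicit Arguments.
Unset Strict Implicit.
Unset Printing Implicit Defensive.

(* A feasible solution of IM(G,T) with T < n describes a forcing process: a
   vertex v with s_v = 0 has a unique in-arc (u,v) with y_(u,v) = 1, and
   constraints (ii)-(iii) then force x_u < x_v and x_w < x_v for every other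
   neighbour w of u, so by induction v is filled after x_v + 1 rounds.
   Conversely, a zero forcing set D yields a feasible solution of objective
   |D|: let y select, for each v outside D, one vertex forcing it, and let x_v
   be the number of vertices filled strictly before v. Hence the optimal value
   of IM(G,T) is Z(G) and the vertices with s_v = 1 form a minimum zero
   forcing set. *)

Lemma IM_objective_card (V : finType) (s : V -> int) :
  (forall v, s v = 0 \/ s v = 1)%R ->
  IM_objective s = (#|[set v | s v == 1%R]|%:Z)%R.
Proof.
move=> s01; rewrite /IM_objective (bigID (fun v => s v == 1%R)) /=.
rewrite [X in (_ + X)%R]big1 ?addr0; last first.
  by move=> v /negbTE; case: (s01 v) => ->.
rewrite (eq_bigr (fun=> 1%R)) => [|v /eqP //].
by rewrite sumr_const -natz cardsE.
Qed.

Section Forcing.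

Variables (V : finType) (e : rel V).

Definition forces (F : {set V}) (u v : V) : bool :=
  [&& u \in F, e u v & [forall w, (e u w && (w != v)) ==> (w \in F)]].

Lemma mem_force_step F v :
  (v \in force_step e F) = (v \in F) || [exists u, forces F u v].
Proof. by rewrite !inE; case: (v \in F). Qed.

Lemma sub_iter_force_step (C : {set V}) :
  {homo (fun k => iter k (force_step e) C) : m n / m <= n >-> m \subset n}.
Proof.
apply: homo_leq => [F|F1 F2 F3|k]; [exact: subxx | exact: subset_trans |].
exact: subsetUl.
Qed.

End Forcing.

Section FeasibleToForcing.

Variables (V : finType) (e : rel V) (T : int).
Variables (s x : V -> int) (y : V -> V -> int) (z : int).
Hypothesis feas : IM_feasible e T s x y z.

Local Notation C := [set v | s v == 1%R].

Lemma IM_uninfected_in_arc v : s v = 0%R -> exists2 u, e u v & y u v = 1%R.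
Proof.
case: feas => _ _ y01 _ [Hi _ _ _] s0.
have [/existsP [u /andP [euv /eqP yuv]]|/existsPn no_arc] :=
  boolP [exists u, e u v && (y u v == 1%R)]; first by exists u.
have := Hi v; rewrite s0 add0r big1 // => u euv.
by have := no_arc u; rewrite euv /=; case: (y01 u v euv) => ->.
Qed.

Lemma IM_arc_tail_earlier u v : e u v -> y u v = 1%R -> (x u < x v)%R.
Proof.
by case: feas => _ _ _ _ [_ Hii _ _] euv yuv; have := Hii u v euv; lia.
Qed.

Lemma IM_arc_nbr_earlier u v w :
  e u v -> e u w -> w != v -> y u v = 1%R -> (x w < x v)%R.
Proof.
case: feas => _ _ _ _ [_ _ Hiii _] euv euw wv yuv.
by have := Hiii u v w euv euw wv; lia.
Qed.

Lemma IM_filled_by_time k v : (x v < k%:Z)%R -> v \in iter k (force_step e) C.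
Proof.
elim: k v => [|k IHk] v xv; first by case: feas => _ /(_ v) x0T; lia.
rewrite iterS mem_force_step.
have [s0|s1] : s v = 0%R \/ s v = 1%R by case: feas.
  have [u euv yuv] := IM_uninfected_in_arc s0.
  apply/orP; right; apply/existsP; exists u; rewrite /forces euv.
  rewrite IHk /=; last by have := IM_arc_tail_earlier euv yuv; lia.
  apply/forallP => w; apply/implyP => /andP [euw wv]; apply: IHk.
  by have := IM_arc_nbr_earlier euv euw wv yuv; lia.
by apply/orP; left; apply: subsetP (sub_iter_force_step e C (leq0n k)) _ _;
  rewrite inE s1.
Qed.

Lemma IM_feasible_zero_forcing :
  (T <= (#|V|.-1)%:Z)%R -> zero_forcing_set e C.
Proof.
move=> leTn; apply/setP => v; rewrite inE; apply: IM_filled_by_time.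
have n_gt0 : (0 < #|V|)%N by apply/card_gt0P; exists v.
by case: feas => _ /(_ v) x0T; lia.
Qed.

End FeasibleToForcing.

Section ForcingToFeasible.

Variables (V : finType) (e : rel V) (D : {set V}).
Hypothesis zfD : zero_forcing_set e D.

Local Notation filled k := (iter k (force_step e) D).

Lemma filled_eventually v : exists k, v \in filled k.
Proof. by exists #|V|; rewrite [filled _]zfD inE. Qed.

Definition fill_time v : nat := ex_minn (filled_eventually v).

Lemma fill_timeP v k : (v \in filled k) = (fill_time v <= k).
Proof.
rewrite /fill_time; case: ex_minnP => t vt t_min.
apply/idP/idP => [/t_min //|le_tk].
exact: subsetP (sub_iter_force_step e D le_tk) _ vt.
Qed.

Lemma fill_time_gt0 v : v \notin D -> (0 < fill_time v)%N.
Proof. by apply: contraR; rewrite -leqNgt -fill_timeP. Qed.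

Lemma forced_at_fill_time v :
  v \notin D -> exists u, forces e (filled (fill_time v).-1) u v.
Proof.
move=> vD; have t_gt0 := fill_time_gt0 vD.
have := leqnn (fill_time v); rewrite -fill_timeP -{1}(prednK t_gt0) iterS.
rewrite mem_force_step fill_timeP -ltnS prednK // ltnn /=.
by move/existsP.
Qed.

Lemma forces_filled_before k u v :
  forces e (filled k) u v ->
  [/\ e u v, (fill_time u <= k)%N &
      forall w, e u w -> w != v -> (fill_time w <= k)%N].
Proof.
case/and3P => uk euv /forallP nbrs; rewrite -fill_timeP; split=> // w euw wv.
by rewrite -fill_timeP; apply: implyP (nbrs w) _; rewrite euw wv.
Qed.

Definition forcer v : option V :=
  [pick u | forces e (filled (fill_time v).-1) u v].

Lemma forcerP v :
  v \notin D ->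
  exists2 u, forcer v = Some u & forces e (filled (fill_time v).-1) u v.
Proof.
move=> vD; rewrite /forcer; case: pickP => [u fu|none]; first by exists u.
by have [u fu] := forced_at_fill_time vD; have := none u; rewrite fu.
Qed.

Lemma forcer_earlier u v :
  v \notin D -> forcer v = Some u ->
  [/\ e u v, (fill_time u < fill_time v)%N &
      forall w, e u w -> w != v -> (fill_time w < fill_time v)%N].
Proof.
move=> vD; rewrite /forcer; case: pickP => // u' fu' [<-].
have t_gt0 := fill_time_gt0 vD.
have [euv tu tw] := forces_filled_before fu'.
split=> [//||w euw wv]; rewrite -(prednK t_gt0) ltnS //; exact: tw.
Qed.

(* Ranks instead of fill times keep x bounded by n - 1 without arguing that
   the forcing process never stalls. *)
Definition fill_rank v : nat := #|[set w | fill_time w < fill_time v]|.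

Lemma fill_rank_lt u v :
  (fill_time u < fill_time v)%N -> (fill_rank u < fill_rank v)%N.
Proof.
move=> tuv; apply: proper_card; apply/properP; split.
  by apply/subsetP => w; rewrite !inE => twu; apply: ltn_trans tuv.
by exists u; rewrite !inE ?ltnn.
Qed.

Lemma fill_rank_le v : (fill_rank v <= #|V|.-1)%N.
Proof.
have : (fill_rank v < #|[set: V]|)%N.
  apply: proper_card; rewrite properT; apply/eqP => /setP /(_ v).
  by rewrite !inE ltnn.
by rewrite cardsT; case: #|V|.
Qed.

Definition zf_s v : int := (v \in D)%:R.
Definition zf_x v : int := (fill_rank v)%:Z.
Definition zf_y u v : int := ((v \notin D) && (forcer v == Some u))%:R.

Lemma zf_in_arcs v : (zf_s v + \sum_(u | e u v) zf_y u v)%R = 1%R.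
Proof.
rewrite /zf_s /zf_y; have [vD|vD] /= := boolP (v \in D).
  by rewrite big1 ?addr0.
have [u fu _] := forcerP vD; have [euv _ _] := forcer_earlier vD fu.
rewrite add0r (bigD1 u) //= fu eqxx big1 ?addr0 // => w /andP [_ wu].
by case: eqP => // [[uw]]; rewrite uw eqxx in wu.
Qed.

Lemma zero_forcing_IM_feasible T :
  ((#|V|.-1)%:Z <= T)%R ->
  exists s x y z, IM_feasible e T s x y z /\ IM_objective s = (#|D|%:Z)%R.
Proof.
move=> leTn; have rank_le v := fill_rank_le v.
have zf_s01 v : zf_s v = 0%R \/ zf_s v = 1%R.
  by rewrite /zf_s; case: (v \in D); [right|left].
have zf_y01 u v : zf_y u v = 0%R \/ zf_y u v = 1%R.
  by rewrite /zf_y; case: (_ && _); [right|left].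
have zf_sD : [set v | zf_s v == 1%R] = D.
  by apply/setP => v; rewrite inE /zf_s; case: (v \in D).
exists zf_s, zf_x, zf_y, T; split; last by rewrite IM_objective_card // zf_sD.
split=> [|v|u v _||]; rewrite /zf_x.
- exact: zf_s01.
- by have := rank_le v; lia.
- exact: zf_y01.
- lia.
split=> [v|u v euv|u v w euv euw wv|v]; first exact: zf_in_arcs.
- rewrite /zf_y; case: (boolP (_ && _)) => [/andP [vD /eqP fu]|_].
    by have [_ /fill_rank_lt tuv _] := forcer_earlier vD fu; lia.
  by have := rank_le u; lia.
- rewrite /zf_y; case: (boolP (_ && _)) => [/andP [vD /eqP fu]|_].
    by have [_ _ /(_ w euw wv) /fill_rank_lt twv] := forcer_earlier vD fu; lia.
  by have := rank_le w; lia.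
- by have := rank_le v; lia.
Qed.

End ForcingToFeasible.

Theorem corollary3p3 (V : finType) (e : rel V) (s x : V -> int)
  (y : V -> V -> int) (z : int) :
  simple_graph e ->
  IM_optimal e (#|V|.-1)%:Z s x y z ->
  min_zero_forcing_set e [set v | s v == 1%R].
Proof.
move=> _ [feas opt]; split; first exact: IM_feasible_zero_forcing feas (lexx _).
move=> D /zero_forcing_IM_feasible /(_ _ (lexx _)).
move=> [s' [x' [y' [z' [feas' obj']]]]].
have s01 : forall v, (s v = 0 \/ s v = 1)%R by case: feas.
by have := opt _ _ _ _ feas'; rewrite obj' IM_objective_card // lez_nat.
Qed.
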